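(* $w^\ast(2,3)=17$. That is, every 2-coloring of $\{1,\dots,17\}$ contains a monochromatic double 3-term arithmetic progression, while the 2-coloring of $\{1,\dots,16\}$ given by the word $0010110100101101$ (the $n$-th letter being the color of $n$) contains no monochromatic double 3-term arithmetic progression.
   Context: An increasing sequence of positive integers $a_1<a_2<\cdots$ (finite or infinite) contains a double 3-term arithmetic progression if there are indices $i<j<k$ with $i+k=2j$ and $a_i+a_k=2a_j$. For a coloring of an interval, each color class is regarded as an increasing sequence by listing its elements in increasing order; a monochromatic double 3-term arithmetic progression is a double 3-term arithmetic progression in some color class. For integers $r,k$, $w^\ast(r,k)$ denotes the least integer $N$, if it exists, such that every $r$-coloring of $\{1,\dots,N\}$ has a monochromatic double $k$-term arithmetic progression (defined analogously with $k$ indices in arithmetic progression whose values are also in arithmetic progression). *)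

From mathcomp Require Import all_boot.
Set Implicit Arguments. Unset Strict Implicit. Unset Printing Implicit Defensive.

Definition has_double3AP (s : seq nat) : Prop :=
  exists i j k, [/\ i < j, j < k, k < size s, i + k = 2 * j &
                    nth 0 s i + nth 0 s k = 2 * nth 0 s j].

(* A 2-coloring of {1,...,N} is given by col : nat -> bool (only its values on
   1..N matter).  The color class of b, listed increasingly. *)
Definition color_class (N : nat) (col : nat -> bool) (b : bool) : seq nat :=
  [seq n <- iota 1 N | col n == b].

Definition mono_double3AP (N : nat) (col : nat -> bool) : Prop :=
  exists b : bool, has_double3AP (color_class N col b).

Definition word16 : seq bool :=
  [:: false; false; true; false; true; true; false; true;
      false; false; true; false; true; true; false; true].

Definition col16 (n : nat) : bool := nth false word16 n.-1.

(* The upper bound is [search 17 [::]], checked by evaluation; the lower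
   bound is the evaluation of [mono_ap3b] on the word 0010110100101101. *)

From mathcomp Require Import all_boot.
From mathcomp Require Import zify.

Definition has_ap3b (s : seq nat) : bool :=
  has (fun i => has (fun j => [&& i < j, 2 * j - i < size s &
        nth 0 s i + nth 0 s (2 * j - i) == 2 * nth 0 s j])
     (iota 0 (size s))) (iota 0 (size s)).

Lemma has_ap3bP (s : seq nat) : reflect (has_double3AP s) (has_ap3b s).
Proof.
apply: (iffP idP).
- move=> /hasP [i _ /hasP [j _ /and3P [ij ks /eqP e]]].
  exists i, j, (2 * j - i); split => //; lia.
- move=> [i [j [k [ij jk ks ik e]]]].
  apply/hasP; exists i; first by rewrite mem_iota /=; lia.
  apply/hasP; exists j; first by rewrite mem_iota /=; lia.
  have -> : 2 * j - i = k by lia.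
  by rewrite ij ks e eqxx.
Qed.

Lemma has_double3AP_cat (s t : seq nat) :
  has_double3AP s -> has_double3AP (s ++ t).
Proof.
move=> [i [j [k [ij jk ks ik e]]]].
exists i, j, k; rewrite size_cat !nth_cat.
have [hi hj] : i < size s /\ j < size s by lia.
rewrite hi hj ks; split => //; lia.
Qed.

Definition class_of (w : seq bool) (b : bool) : seq nat :=
  [seq p.1 | p <- zip (iota 1 (size w)) w & p.2 == b].

Lemma color_class_word (N : nat) (col : nat -> bool) (b : bool) :
  color_class N col b = class_of [seq col n | n <- iota 1 N] b.
Proof.
rewrite /color_class /class_of size_map size_iota.
elim: N 1 => [//|N IH] m /=.
by case: (col m == b) => /=; rewrite IH.
Qed.

Lemma class_of_cat (p e : seq bool) (b : bool) :
  exists t, class_of (p ++ e) b = class_of p b ++ t.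
Proof.
rewrite /class_of size_cat iotaD zip_cat ?size_iota // filter_cat map_cat.
by eexists.
Qed.

Definition mono_ap3b (w : seq bool) : bool :=
  has_ap3b (class_of w true) || has_ap3b (class_of w false).

Lemma mono_ap3bP (N : nat) (col : nat -> bool) :
  reflect (mono_double3AP N col) (mono_ap3b [seq col n | n <- iota 1 N]).
Proof.
rewrite /mono_ap3b -!color_class_word.
apply: (iffP orP) => [[/has_ap3bP h | /has_ap3bP h] | [[] /has_ap3bP h]].
- by exists true.
- by exists false.
- by left.
- by right.
Qed.

Lemma mono_ap3b_cat (p e : seq bool) : mono_ap3b p -> mono_ap3b (p ++ e).
Proof.
have ext b : has_ap3b (class_of p b) -> has_ap3b (class_of (p ++ e) b).
  have [t ->] := class_of_cat p e b.
  by move=> /has_ap3bP h; apply/has_ap3bP/has_double3AP_cat.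
by rewrite /mono_ap3b => /orP [/ext -> | /ext ->]; rewrite ?orbT.
Qed.

(* The test is an
   [if] rather than [||] so that the pruning survives call-by-value
   evaluation. *)
Fixpoint search (n : nat) (p : seq bool) : bool :=
  if mono_ap3b p then true else
  if n is n'.+1 then search n' (rcons p true) && search n' (rcons p false)
  else false.

Lemma search_sound (n : nat) (p : seq bool) : search n p ->
  forall e, size e = n -> mono_ap3b (p ++ e).
Proof.
elim: n p => [|n IH] p /= + e he;
  case: ifP => [/mono_ap3b_cat // | _] //= /andP [ht hf].
case: e he => [//|b e] [he]; rewrite -cat_rcons.
by case: b; [apply: IH ht _ he | apply: IH hf _ he].
Qed.

Theorem theorem1 :
  (forall col : nat -> bool, mono_double3AP 17 col) /\
  ~ mono_double3AP 16 col16.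
Proof.
split.
- move=> col; apply/mono_ap3bP.
  have all17 : search 17 [::] by vm_compute.
  have size17 : size [seq col n | n <- iota 1 17] = 17.
    by rewrite size_map size_iota.
  exact: search_sound all17 _ size17.
- apply/mono_ap3bP.
  have -> : [seq col16 n | n <- iota 1 16] = word16 by [].
  by vm_compute.
Qed.
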